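(* Let $\mathcal{U}=[c,d]\subset\mathbb{R}$ with $c<d$ and $c\neq -d$. Let $A,A'\in GL(n)$ each have $n$ distinct eigenvalues, let $b,b'\in\mathbb{R}^n$, and assume $b^T\eta\neq 0$ for every left eigenvector $\eta\in\mathbb{C}^n$ of $A$. Suppose the systems $x[i+1]=Ax[i]+bu[i]$ and $x[i+1]=A'x[i]+b'u[i]$, both with $x[0]=0$ and $u[i]\in\mathcal{U}$, have identical reachable sets $\mathcal{R}(j,0)$ for all $j\in\mathbb{N}$. Then $(A,b)=(A',b')$.
   Context: For a system $x[i+1]=Ax[i]+bu[i]$, $x[0]=0$, $u[i]\in\mathcal{U}$, the reachable set at time $j$ is $\mathcal{R}(j,0)=\{\phi_u(j;0)\mid u:\mathbb{Z}_{\ge0}\to\mathcal{U}\}$, where $\phi_u(\cdot;0)$ is the trajectory from initial state $0$ under input sequence $u$. $GL(n)$ is the set of invertible real $n\times n$ matrices. A left eigenvector of $A$ is a nonzero $\eta\in\mathbb{C}^n$ with $\eta^TA=\lambda\eta^T$ for some $\lambda\in\mathbb{C}$; $b^T\eta=\sum_j b_j\eta_j$. *)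

From HB Require Import structures.
From mathcomp Require Import all_boot all_order all_algebra.
From mathcomp Require Import reals complex.
Set Implicit Arguments. Unset Strict Implicit. Unset Printing Implicit Defensive.
Import Order.TTheory GRing.Theory Num.Theory.
Local Open Scope ring_scope.
Local Open Scope complex_scope.

Fixpoint traj (R : realType) (n : nat) (A : 'M[R]_n) (b : 'cV[R]_n)
  (u : nat -> R) (j : nat) : 'cV[R]_n :=
  match j with
  | 0 => 0
  | j'.+1 => A *m traj A b u j' + u j' *: b
  end.

Definition reach (R : realType) (n : nat) (A : 'M[R]_n) (b : 'cV[R]_n)
  (c d : R) (j : nat) : 'cV[R]_n -> Prop :=
  fun x => exists u : nat -> R, (forall i, c <= u i <= d) /\ x = traj A b u j.

Definition cplx_mx (R : realType) (m n : nat) (M : 'M[R]_(m, n)) : 'M[R[i]]_(m, n) :=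
  map_mx (fun x : R => x%:C) M.

Definition distinct_eigs (R : realType) (n : nat) (A : 'M[R]_n) : Prop :=
  exists s : seq R[i], [/\ size s = n, uniq s & all (eigenvalue (cplx_mx A)) s].

Definition left_eig_nondeg (R : realType) (n : nat) (A : 'M[R]_n) (b : 'cV[R]_n) : Prop :=
  forall (eta : 'rV[R[i]]_n) (lam : R[i]),
    eta != 0 -> eta *m cplx_mx A = lam *: eta -> (eta *m cplx_mx b) 0 0 != 0.

(* The reachable set R(j,0) is determined by its support function
   y |-> \sum_(k < j) h (y A^k b), where h t = max_(u in [c, d]) u t.  Since
   h t - h (- t) = (c + d) t with c + d <> 0, equal reachable sets force
   A^k b = A'^k b' for every k.  A nonzero row kernel of the Krylov matrix
   [b, A b, ..., A^(n-1) b] would be A-invariant by Cayley-Hamilton, hence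
   contain a left eigenvector of A orthogonal to b; so the left-eigenvector
   condition makes this matrix invertible, and A and A' agree on its columns. *)

From mathcomp Require Import all_boot all_order all_algebra.
From mathcomp Require Import reals complex.
From mathcomp Require Import ring lra.
Set Implicit Arguments. Unset Strict Implicit. Unset Printing Implicit Defensive.
Import Order.TTheory GRing.Theory Num.Theory.
Local Open Scope ring_scope.

Lemma horner_mx_sum (R : comNzRingType) n (A : 'M[R]_n.+1) (p : {poly R}) :
  horner_mx A p = \sum_(i < size p) p`_i *: A ^+ i.
Proof.
rewrite -{1}(coefK p) poly_def linear_sum; apply: eq_bigr => i _.
by rewrite linearZ /= rmorphXn /= horner_mx_X.
Qed.

Section Krylov.
Variables (F : fieldType) (n : nat) (A : 'M[F]_n) (v : 'cV[F]_n).

Definition krylov_mx : 'M[F]_n := \matrix_(i, k < n) (A ^+ k *m v) i 0.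

Lemma col_krylov_mx (k : 'I_n) : col k krylov_mx = A ^+ k *m v.
Proof. by apply/matrixP => i j; rewrite !mxE ord1. Qed.

Lemma mulmx_krylov_eq0 m (M : 'M_(m, n)) :
  M *m krylov_mx = 0 <-> forall k : 'I_n, M *m (A ^+ k *m v) = 0.
Proof.
split=> [MK0 k | Mk0]; first by rewrite -col_krylov_mx colE mulmxA MK0 mul0mx.
apply/matrixP => i k; have /matrixP/(_ i 0) := Mk0 k.
by rewrite -col_krylov_mx colE mulmxA -colE !mxE.
Qed.

Lemma col_mulmx_krylov_mx m (B : 'M_(m, n)) (k : 'I_n) :
  col k (B *m krylov_mx) = B *m (A ^+ k *m v).
Proof. by rewrite colE -mulmxA -colE col_krylov_mx. Qed.

Lemma mulmx_krylov_eq0_init m (M : 'M_(m, n)) : M *m krylov_mx = 0 -> M *m v = 0.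
Proof.
move/mulmx_krylov_eq0; case: n A v M => [|n'] B w M Mk0.
  by rewrite [w]flatmx0 mulmx0.
by have := Mk0 ord0; rewrite expr0 mul1mx.
Qed.

(* Cayley-Hamilton writes [A ^+ n] as a combination of lower powers. *)
Lemma mulmx_krylov_expn_eq0 m (M : 'M_(m, n)) :
  M *m krylov_mx = 0 -> M *m (A ^+ n *m v) = 0.
Proof.
move/mulmx_krylov_eq0; case: n A v M => [|n'] B w M Mk0.
  by rewrite [M]thinmx0 mul0mx.
have sp : size (char_poly B) = n'.+2 by rewrite size_char_poly.
have lead1 : (char_poly B)`_n'.+1 = 1.
  by have /monicP := char_poly_monic B; rewrite lead_coefE sp.
have /(congr1 (fun X => M *m X *m w)) := Cayley_Hamilton B.
rewrite horner_mx_sum sp big_ord_recr /= lead1 scale1r mulmxDr mulmxDl.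
rewrite mulmx0 mul0mx mulmx_sumr mulmx_suml big1 ?add0r -?mulmxA //.
by move=> i _; rewrite -scalemxAr -scalemxAl -mulmxA Mk0 scaler0.
Qed.

Lemma krylov_kermx_stable : (kermx krylov_mx *m A <= kermx krylov_mx)%MS.
Proof.
have kerK := mulmx_ker krylov_mx.
apply/sub_kermxP/mulmx_krylov_eq0 => k; rewrite -mulmxA (mulmxA A) mulmxE -exprS.
have [lt_kn | ge_kn] := ltnP k.+1 n.
  by have /mulmx_krylov_eq0/(_ (Ordinal lt_kn)) := kerK.
have -> : k.+1 = n by apply/eqP; rewrite eqn_leq ge_kn ltn_ord.
exact: mulmx_krylov_expn_eq0.
Qed.

End Krylov.

Lemma map_krylov_mx (F K : fieldType) (f : {rmorphism F -> K}) n
    (A : 'M[F]_n) (v : 'cV[F]_n) :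
  map_mx f (krylov_mx A v) = krylov_mx (map_mx f A) (map_mx f v).
Proof.
have map_expmx k : map_mx f (A ^+ k) = map_mx f A ^+ k.
  elim: k => [|k IHk]; first exact: map_mx1.
  by rewrite !exprS -!mulmxE map_mxM IHk.
by apply/matrixP => i k; rewrite [RHS]mxE -map_expmx -map_mxM !mxE.
Qed.

Lemma stable_submx_left_eigenvector (F : closedFieldType) m n
    (A : 'M[F]_n) (B : 'M[F]_(m, n)) :
  B != 0 -> (B *m A <= B)%MS ->
  exists eta : 'rV_n, exists lam,
    [/\ eta != 0, eta *m A = lam *: eta & (eta <= B)%MS].
Proof.
move=> nzB stabB; have rkB : (0 < \rank B)%N by rewrite lt0n mxrank_eq0.
have stabC : (row_base B *m A <= row_base B)%MS.
  by apply: submx_trans (submxMr _ _) _; rewrite eq_row_base.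
have sCB : (row_base B <= B)%MS by rewrite eq_row_base.
move: (row_base B) (row_base_free B) stabC sCB rkB.
case: (\rank B) => // r C freeC /submxP[D CA] sCB _.
have /closed_rootP[a] : size (char_poly D) != 1 by rewrite size_char_poly.
rewrite -eigenvalue_root_char => /eigenvalueP[x xD nz_x].
exists (x *m C), a; split.
- by rewrite mulmx_free_eq0.
- by rewrite -mulmxA CA mulmxA xD -scalemxAl.
- exact: submx_trans (submxMl x C) sCB.
Qed.

Lemma krylov_mx_unit (F : closedFieldType) n (A : 'M[F]_n) (v : 'cV[F]_n) :
  (forall (eta : 'rV_n) lam, eta != 0 -> eta *m A = lam *: eta -> eta *m v != 0) ->
  krylov_mx A v \in unitmx.
Proof.
move=> nondeg; rewrite -row_free_unit -kermx_eq0; apply: contraT => nzker.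
have [eta [lam [nz_eta etaA /sub_kermxP etaK]]] :=
  stable_submx_left_eigenvector nzker (krylov_kermx_stable A v).
by have := nondeg eta lam nz_eta etaA; rewrite (mulmx_krylov_eq0_init etaK) eqxx.
Qed.

Section SupportFunction.
Variables (R : realType) (n : nat) (c d : R).
Implicit Types (A : 'M[R]_n) (b : 'cV[R]_n) (y : 'rV[R]_n) (u : nat -> R).

Definition interval_input (t : R) : R := if 0 <= t then d else c.

Definition interval_support (t : R) : R := interval_input t * t.

Definition reach_support A b j y : R :=
  \sum_(k < j) interval_support ((y *m (A ^+ k *m b)) 0 0).

Lemma mul_le_interval_support (x t : R) : c <= x <= d -> x * t <= interval_support t.
Proof.
move=> /andP[cu ud]; rewrite /interval_support /interval_input.
by case: ifP => [t_ge0 | /negbT]; [rewrite ler_wpM2r | rewrite -ltNge => ?; nra].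
Qed.

Lemma interval_supportBN (t : R) : interval_support t - interval_support (- t) = (c + d) * t.
Proof.
rewrite /interval_support /interval_input oppr_ge0.
by case: (ltrgtP 0 t) => [_|_|<-]; ring.
Qed.

Lemma traj_eq A b u u' j :
  (forall i, (i < j)%N -> u i = u' i) -> traj A b u j = traj A b u' j.
Proof.
elim: j => [//|j IHj] eq_u /=.
by rewrite IHj ?eq_u // => i lt_ij; apply: eq_u; apply: ltnW.
Qed.

Lemma mulmx_trajS A b u j y : (y *m traj A b u j.+1) 0 0 =
  ((y *m A) *m traj A b u j) 0 0 + u j * (y *m b) 0 0.
Proof. by rewrite /= mulmxDr mulmxA -scalemxAr !mxE. Qed.

Lemma reach_supportS A b j y : reach_support A b j.+1 y =
  interval_support ((y *m b) 0 0) + reach_support A b j (y *m A).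
Proof.
rewrite /reach_support big_ord_recl expr0 mul1mx; congr (_ + _).
by apply: eq_bigr => k _; rewrite exprS -mulmxE !mulmxA.
Qed.

Lemma reach_supportSr A b j y : reach_support A b j.+1 y =
  reach_support A b j y + interval_support ((y *m (A ^+ j *m b)) 0 0).
Proof. by rewrite /reach_support big_ord_recr. Qed.

Lemma mulmx_traj_le_reach_support A b u : (forall i, c <= u i <= d) ->
  forall j y, (y *m traj A b u j) 0 0 <= reach_support A b j y.
Proof.
move=> u_cd; elim=> [|j IHj] y; first by rewrite mulmx0 mxE /reach_support big_ord0.
by rewrite mulmx_trajS reach_supportS addrC lerD ?mul_le_interval_support.
Qed.

Hypothesis c_le_d : c <= d.

Lemma interval_input_cd (t : R) : c <= interval_input t <= d.
Proof. by rewrite /interval_input; case: ifP; rewrite lexx c_le_d. Qed.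

(* The last input only meets [y *m b], the earlier ones see [y *m A]. *)
Lemma reach_support_attained A b j y : exists u, (forall i, c <= u i <= d) /\
  (y *m traj A b u j) 0 0 = reach_support A b j y.
Proof.
elim: j y => [|j IHj] y.
  by exists (fun=> c); rewrite mulmx0 mxE /reach_support big_ord0 lexx c_le_d.
have [u [u_cd yAu]] := IHj (y *m A).
exists (fun i => if i == j then interval_input ((y *m b) 0 0) else u i); split.
  by move=> i; case: ifP => _; rewrite ?interval_input_cd ?u_cd.
rewrite mulmx_trajS reach_supportS eqxx addrC -yAu; congr (_ + _); congr (_ 0 0).
by congr (_ *m _); apply: traj_eq => i lt_ij; rewrite ifF // ltn_eqF.
Qed.

Lemma reach_support_eq A b A' b' :
  (forall j, reach A b c d j = reach A' b' c d j) ->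
  forall j y, reach_support A b j y = reach_support A' b' j y.
Proof.
suff le_support A1 b1 A2 b2 : (forall j, reach A1 b1 c d j = reach A2 b2 c d j) ->
    forall j y, reach_support A1 b1 j y <= reach_support A2 b2 j y.
  by move=> eq_reach j y; apply/eqP; rewrite eq_le !le_support // => k; rewrite eq_reach.
move=> eq_reach j y; have [u [u_cd <-]] := reach_support_attained A1 b1 j y.
have : reach A1 b1 c d j (traj A1 b1 u j) by exists u.
by rewrite eq_reach => -[u' [u'_cd ->]]; apply: mulmx_traj_le_reach_support.
Qed.

Hypothesis cd_neq0 : c + d != 0.

(* Testing the newest support term at [y = e_i] and [y = - e_i] isolates
   [(c + d)] times the [i]-th entry of [A ^+ k *m b]. *)
Lemma reach_eq_krylov A b A' b' :
  (forall j, reach A b c d j = reach A' b' c d j) ->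
  forall k, A ^+ k *m b = A' ^+ k *m b'.
Proof.
move=> eq_reach k.
have eq_term y : interval_support ((y *m (A ^+ k *m b)) 0 0) =
                 interval_support ((y *m (A' ^+ k *m b')) 0 0).
  have := reach_support_eq eq_reach k.+1 y.
  by rewrite !reach_supportSr (reach_support_eq eq_reach) => /addrI.
apply/matrixP => i j; rewrite [j]ord1; apply: (mulfI cd_neq0).
have := eq_term (- delta_mx 0 i); have := eq_term (delta_mx 0 i).
rewrite !mulNmx -!rowE !mxE => eq_pos eq_neg.
by rewrite -!interval_supportBN eq_pos eq_neg.
Qed.

End SupportFunction.

Theorem theorem2 (R : realType) (n : nat) (c d : R)
  (A A' : 'M[R]_n) (b b' : 'cV[R]_n) :
  c < d -> c != - d ->
  A \in unitmx -> A' \in unitmx ->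
  distinct_eigs A -> distinct_eigs A' ->
  left_eig_nondeg A b ->
  (forall j : nat, reach A b c d j = reach A' b' c d j) ->
  A = A' /\ b = b'.
Proof.
move=> lt_cd neq_cNd _ _ _ _ nondeg eq_reach.
have cd_neq0 : c + d != 0 by rewrite addr_eq0.
have krylovE := reach_eq_krylov (ltW lt_cd) cd_neq0 eq_reach.
have eq_b : b = b' by have := krylovE 0%N; rewrite !expr0 !mul1mx.
split=> //.
have freeK : row_free (krylov_mx A b).
  rewrite row_free_unit -(map_unitmx (real_complex R)) map_krylov_mx; apply: krylov_mx_unit.
  move=> eta lam nz_eta etaA; apply: contraNneq (nondeg eta lam nz_eta etaA).
  by move=> ->; rewrite mxE.
apply: (row_free_inj freeK); apply/trmx_inj/row_matrixP => k; rewrite -!tr_col.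
congr trmx; rewrite !col_mulmx_krylov_mx [LHS]mulmxA mulmxE -exprS krylovE (krylovE k).
by rewrite mulmxA mulmxE -exprS.
Qed.
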